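(* Let $G=(V,E)$ be a finite simple graph and $T\geq1$ an integer. For each zero forcing set $C$ that is the initial set of a zero forcing game in $\mathcal{Z}(G,T)$, there is a feasible solution $(x,y,z)$ of the Time Step Model $\mathrm{TSM}(G,T)$ such that $|C|=\sum_{v\in V}x^0_v$ and $\sum_{t\in[T]}z^t=\mathrm{pt}(G,C)\leq T$.
   Context: Zero forcing: $n=|V|$, $N(u)$ is the neighborhood of $u$, $d(u)=|N(u)|$. Under the standard color change rule, a filled vertex $u$ can force a non-filled vertex $v$ if $v$ is the only non-filled neighbor of $u$. A zero forcing game on $G$ with initial set $C\subseteq V$ consists of sets $C^{(0)}=C^{[0]}=C$, sets $C^{(t)}$ (vertices forced at step $t$) with $C^{[t]}=C^{[t-1]}\cup C^{(t)}$, and a collection $\phi(C)$ of forces $u\to v$, such that every vertex lies in exactly one $C^{(t)}$, and each $v\in C^{(t)}$, $t\geq1$, is forced by exactly one neighbor $u$ such that $u$ and all neighbors of $u$ other than $v$ lie in $C^{[t-1]}$. $C$ is a zero forcing set if repeated forcing eventually fills all of $V$. The propagation time $\mathrm{pt}(G,C)$ is the smallest $t^*$ with $C^{[t^*]}=V$ when at each step all possible forces are applied simultaneously, i.e. $C^{(t)}$ is the set of all $v\notin C^{[t-1]}$ for which some $u\in C^{[t-1]}$ has $v$ as its unique neighbor outside $C^{[t-1]}$ ($\mathrm{pt}(G,C)=\infty$ if $C$ is not a zero forcing set). Here $\mathcal{Z}(G,T)$ denotes the family of zero forcing games on $G$ whose initial set is a zero forcing set, which use at most $T$ time steps, and in which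 at each time step all possible forces are applied. Time Step Model: $A$ is the set of arcs containing $(u,v)$ and $(v,u)$ for each edge $\{u,v\}$, $[T]=\{1,\dots,T\}$. $\mathrm{TSM}(G,T)$ has binary variables $x^t_v$ ($v\in V$, $t\in\{0,\dots,T\}$), $y^t_a$ ($a\in A$, $t\in[T]$), $z^t$ ($t\in[T]$), with constraints: (1) $x^0_v+\sum_{t\in[T]}\sum_{a=(u,v)\in A}y^t_a=1$ for all $v$; (2) $y^t_a\leq x^{t-1}_u$ for all $a=(u,v)\in A$, $t\in[T]$; (3) $y^t_a\leq x^{t-1}_w$ for all $a=(u,v)\in A$, $w\in N(u)\setminus\{v\}$, $t\in[T]$; (4) $x^t_v=x^{t-1}_v+\sum_{a=(u,v)\in A}y^t_a$ for all $v$, $t\in[T]$; (5) $x^{t-1}_u-x^{t-1}_v+\sum_{w\in N(u)\setminus\{v\}}x^{t-1}_w\leq\sum_{a=(w,v)\in A}y^t_a+d(u)-1$ for all $(u,v)\in A$, $t\in[T]$; (6) $\frac1n\sum_{v\in V}(x^t_v-x^{t-1}_v)-z^t\leq0$ for all $t\in[T]$; (7) $z^t-\sum_{v\in V}(x^t_v-x^{t-1}_v)\leq 0$ for all $t\in[T]$. A feasible solution is one satisfying all constraints. *)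

From mathcomp Require Import all_boot all_order all_algebra.
Set Implicit Arguments. Unset Strict Implicit. Unset Printing Implicit Defensive.
Import Order.TTheory GRing.Theory Num.Theory.

Definition simple_graph (V : finType) (adj : rel V) : Prop :=
  symmetric adj /\ irreflexive adj.

Definition nbhd (V : finType) (adj : rel V) (u : V) : {set V} := [set w | adj u w].

Definition zf_step (V : finType) (adj : rel V) (S : {set V}) : {set V} :=
  S :|: [set v | [exists u, [&& u \in S, adj u v &
                 [forall w, (adj u w && (w != v)) ==> (w \in S)]]]].

Definition filled_at (V : finType) (adj : rel V) (C : {set V}) (t : nat) : {set V} :=
  iter t (zf_step adj) C.

Definition is_pt (V : finType) (adj : rel V) (C : {set V}) (p : nat) : Prop :=
  filled_at adj C p = setT /\ (forall t, (t < p)%N -> filled_at adj C t != setT).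

Definition in_ZGT (V : finType) (adj : rel V) (T : nat) (C : {set V}) : Prop :=
  exists t, (t <= T)%N /\ filled_at adj C t = setT.

Local Open Scope ring_scope.

Definition binary (r : rat) : bool := (r == 0) || (r == 1).

(* Feasibility for TSM(G,T).  x t v = x^t_v (t in 0..T), y t u v = y^t_{(u,v)}
   for arcs (u,v) (adj u v), t in [T]; z t = z^t. Values outside these index
   ranges are irrelevant. *)
Definition TSM_feasible (V : finType) (adj : rel V) (T : nat)
    (x : nat -> V -> rat) (y : nat -> V -> V -> rat) (z : nat -> rat) : Prop :=
  (forall t v, (t <= T)%N -> binary (x t v)) /\
  (forall t u v, (1 <= t <= T)%N -> adj u v -> binary (y t u v)) /\
  (forall t, (1 <= t <= T)%N -> binary (z t)) /\
  (forall v, x 0%N v + \sum_(1 <= t < T.+1) \sum_(u | adj u v) y t u v = 1) /\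
  (forall t u v, (1 <= t <= T)%N -> adj u v -> y t u v <= x t.-1 u) /\
  (forall t u v w, (1 <= t <= T)%N -> adj u v -> w \in nbhd adj u -> w != v ->
      y t u v <= x t.-1 w) /\
  (forall t v, (1 <= t <= T)%N ->
      x t v = x t.-1 v + \sum_(u | adj u v) y t u v) /\
  (forall t u v, (1 <= t <= T)%N -> adj u v ->
      x t.-1 u - x t.-1 v + \sum_(w in nbhd adj u :\ v) x t.-1 w
        <= \sum_(w | adj w v) y t w v + (#|nbhd adj u|)%:R - 1) /\
  (forall t, (1 <= t <= T)%N ->
      (#|V|%:R)^-1 * \sum_(v : V) (x t v - x t.-1 v) - z t <= 0) /\
  (forall t, (1 <= t <= T)%N ->
      z t - \sum_(v : V) (x t v - x t.-1 v) <= 0).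

(* The feasible solution is the parallel forcing process itself: x^t_v says
   whether v is filled after t steps, y^t_(u,v) selects one forcer u of each v
   forced at step t, and z^t says whether step t forces anything, so the z^t add
   up to pt(G,C).  The only constraint with content is (5): if u and all of
   N(u) \ {v} are filled, then v is filled already or is forced at the next
   step. *)

From mathcomp Require Import all_boot all_order all_algebra.
From mathcomp Require Import zify lra.
Set Implicit Arguments. Unset Strict Implicit.
Import GRing.Theory Num.Theory.
Local Open Scope ring_scope.

Lemma sum_mem_card (R : pzSemiRingType) (T : finType) (A B : {set T}) :
  \sum_(w in A) (w \in B)%:R = #|A :&: B|%:R :> R.
Proof.
rewrite -natr_sum -sum1_card; congr _%:R.
rewrite [LHS]big_mkcond [RHS]big_mkcond /=.
by apply: eq_bigr => w _; rewrite inE; case: (w \in A); case: (w \in B).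
Qed.

Lemma sum_indicator_card (R : pzSemiRingType) (T : finType) (B : {set T}) :
  \sum_(w : T) (w \in B)%:R = #|B|%:R :> R.
Proof.
rewrite -[in RHS](setTI B) -sum_mem_card.
by apply: eq_bigl => w; rewrite inE.
Qed.

Lemma card_ratio_le1 (R : numFieldType) (T : finType) (A : {pred T}) :
  (#|T|%:R)^-1 * #|A|%:R <= 1 :> R.
Proof.
have [-> | nz] := eqVneq (#|T|%:R : R) 0; first by rewrite invr0 mul0r.
rewrite -[leRHS](mulVf nz); apply: ler_wpM2l; first by rewrite invr_ge0.
by rewrite ler_nat max_card.
Qed.

Lemma sum_leq_indicator m p :
  (\sum_(1 <= t < m.+1) (t <= p) = minn m p)%N.
Proof.
elim: m => [|m IH]; first by rewrite big_geq // min0n.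
by rewrite big_nat_recr //= IH; case: leqP => h; lia.
Qed.

Lemma binary_bool (b : bool) : binary b%:R.
Proof. by case: b. Qed.

Section ParallelForcing.

Variables (V : finType) (adj : rel V).

Definition forces (S : {set V}) (u v : V) : bool :=
  [&& u \in S, adj u v & nbhd adj u :\ v \subset S].

Lemma in_zf_step (S : {set V}) v :
  (v \in zf_step adj S) = (v \in S) || [exists u, forces S u v].
Proof.
rewrite !inE; congr (_ || _); apply: eq_existsb => u; congr [&& _, _ & _].
apply/forallP/subsetP => [all_in w | sub w].
- by rewrite !inE => /andP[wv uw]; apply: (implyP (all_in w)); rewrite uw wv.
- by apply/implyP => /andP[uw wv]; apply: sub; rewrite !inE wv.
Qed.

Lemma zf_step_subset (S : {set V}) : S \subset zf_step adj S.
Proof. by apply/subsetP => v vS; rewrite in_zf_step vS. Qed.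

Variable C : {set V}.
Local Notation S := (filled_at adj C).

Lemma filled_atS t : S t.+1 = zf_step adj (S t).
Proof. exact: iterS. Qed.

Lemma filled_at_mono : {homo S : s t / (s <= t)%N >-> s \subset t}.
Proof.
apply: homo_leq => [A | A B D | t]; [exact: subxx | exact: subset_trans |].
by rewrite filled_atS zf_step_subset.
Qed.

Lemma filled_at_stable s t : S s.+1 = S s -> (s <= t)%N -> S t = S s.
Proof.
move=> fixed /subnKC <-; elim: (t - s)%N => [|k IH]; first by rewrite addn0.
by rewrite addnS filled_atS IH -filled_atS.
Qed.

Lemma is_pt_exists T : in_ZGT adj T C -> exists2 p, is_pt adj C p & (p <= T)%N.
Proof.
case=> t [tT full]; have ex_full : exists t, S t == setT by exists t; apply/eqP.
case: (ex_minnP ex_full) => p /eqP Sp p_min; exists p.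
- by split=> // s sp; apply/negP => /p_min; rewrite leqNgt sp.
- by apply: leq_trans tT; apply: p_min; apply/eqP.
Qed.

Lemma filled_at_pt p t : is_pt adj C p -> (p <= t)%N -> S t = setT.
Proof.
by case=> Sp _ pt; apply/eqP; rewrite eqEsubset subsetT -Sp filled_at_mono.
Qed.

(* [forced_at t] is the paper's C^(t+1). *)
Definition forced_at t : {set V} := S t.+1 :\: S t.

Lemma forced_at_pt p t : is_pt adj C p -> (forced_at t != set0) = (t < p)%N.
Proof.
move=> ptp; rewrite /forced_at setD_eq0; case: ltnP => [tp | pt].
- apply/negP => sub; have fixed : S t.+1 = S t.
    by apply/eqP; rewrite eqEsubset sub filled_at_mono.
  by case: ptp => Sp /(_ t tp); rewrite -(filled_at_stable fixed (ltnW tp)) Sp eqxx.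
- by rewrite (filled_at_pt ptp (leqW pt)) (filled_at_pt ptp pt) subxx.
Qed.

Lemma filled_atS_indicator t v :
  (v \in S t.+1)%:R = (v \in S t)%:R + (v \in forced_at t)%:R :> rat.
Proof.
rewrite in_setD; case: (boolP (v \in S t)) => [vS | _]; last by rewrite add0r.
by rewrite (subsetP (filled_at_mono (leqnSn t)) v vS) addr0.
Qed.

Definition forcer t v : option V := [pick u | forces (S t) u v].

Lemma forcer_forces t v u : forcer t v = Some u -> forces (S t) u v.
Proof. by rewrite /forcer; case: pickP => // u' u'v [<-]. Qed.

Lemma forcer_forced t v : v \in forced_at t -> exists u, forcer t v = Some u.
Proof.
rewrite inE filled_atS in_zf_step => /andP[/negbTE -> /existsP[u uv]].
by rewrite /forcer; case: pickP => [u' _ | /(_ u)]; [exists u' | rewrite uv].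
Qed.

Definition tsm_x t v : rat := (v \in S t)%:R.
Definition tsm_y t u v : rat :=
  ((v \in forced_at t.-1) && (forcer t.-1 v == Some u))%:R.
Definition tsm_z t : rat := (forced_at t.-1 != set0)%:R.

Lemma sum_tsm_y t v :
  \sum_(u | adj u v) tsm_y t u v = (v \in forced_at t.-1)%:R.
Proof.
rewrite /tsm_y; case: (boolP (v \in forced_at t.-1)) => [vF | _]; last by rewrite big1.
have [u0 Fu0] := forcer_forced vF; have /and3P[_ u0v _] := forcer_forces Fu0.
rewrite (bigD1 u0) //= Fu0 eqxx big1 ?addr0 // => u /andP[_ uu0].
by case: eqP => // [[u0u]]; rewrite u0u eqxx in uu0.
Qed.

Lemma tsm_x_balance t v :
  (1 <= t)%N -> tsm_x t v = tsm_x t.-1 v + \sum_(u | adj u v) tsm_y t u v.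
Proof. by case: t => // t _; rewrite sum_tsm_y /tsm_x filled_atS_indicator. Qed.

Lemma tsm_filled_once T v :
  S T = setT -> tsm_x 0 v + \sum_(1 <= t < T.+1) \sum_(u | adj u v) tsm_y t u v = 1.
Proof.
move=> full; rewrite big_add1 /= (telescope_sumr_eq (tsm_x^~ v)) // => [|t _].
- by rewrite addrC subrK /tsm_x full inE.
- by rewrite (tsm_x_balance v (ltn0Sn t)) (addrC (tsm_x t v)) addrK.
Qed.

Lemma tsm_y_le_forcer t u v : tsm_y t u v <= tsm_x t.-1 u.
Proof.
rewrite /tsm_y /tsm_x; case: (boolP (_ && _)) => [/andP[_ /eqP Fu] | _] //.
by have /and3P[-> _ _] := forcer_forces Fu.
Qed.

Lemma tsm_y_le_neighbour t u v w :
  w \in nbhd adj u :\ v -> tsm_y t u v <= tsm_x t.-1 w.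
Proof.
move=> wN; rewrite /tsm_y /tsm_x; case: (boolP (_ && _)) => [/andP[_ /eqP Fu] | _] //.
by have /and3P[_ _ /subsetP ->] := forcer_forces Fu.
Qed.

Lemma tsm_force_rule t u v : adj u v ->
  tsm_x t.-1 u - tsm_x t.-1 v + \sum_(w in nbhd adj u :\ v) tsm_x t.-1 w
    <= \sum_(w | adj w v) tsm_y t w v + #|nbhd adj u|%:R - 1.
Proof.
move=> uv; rewrite sum_tsm_y /tsm_x sum_mem_card.
set N := nbhd adj u :\ v; set s := t.-1.
have -> : #|nbhd adj u| = #|N|.+1 by rewrite (cardsD1 v) inE uv.
rewrite -natr1; have ge0 (b : bool) : 0 <= b%:R :> rat by case: b.
have le1 (b : bool) : b%:R <= 1 :> rat by case: b.
have [NS | nNS] := boolP (N \subset S s).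
- rewrite (setIidPl NS).
  case: (boolP (u \in S s)) => uS; case: (boolP (v \in S s)) => vS /=;
    have := ge0 (v \in forced_at s); try lra.
  have -> : v \in forced_at s.
    rewrite in_setD filled_atS in_zf_step (negbTE vS) /=.
    by apply/existsP; exists u; rewrite /forces uS uv.
  rewrite mulr1n; lra.
- have : (#|N :&: S s|.+1 <= #|N|)%N.
    rewrite (ltn_leqif (subset_leqif_cards (subsetIl _ _))).
    by apply: contra nNS => /eqP/setIidPl.
  rewrite -(ler_nat rat) -natr1.
  have := ge0 (v \in forced_at s); have := ge0 (v \in S s); have := le1 (u \in S s).
  lra.
Qed.

Lemma sum_tsm_x_step t : (1 <= t)%N ->
  \sum_(v : V) (tsm_x t v - tsm_x t.-1 v) = #|forced_at t.-1|%:R.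
Proof.
case: t => // t _; rewrite -sum_indicator_card; apply: eq_bigr => v _.
by rewrite /tsm_x /= filled_atS_indicator addrAC subrr add0r.
Qed.

Lemma tsm_z_ge_ratio t :
  (#|V|%:R)^-1 * #|forced_at t|%:R - tsm_z t.+1 <= 0.
Proof.
rewrite /tsm_z /= subr_le0; have [-> | _] := eqVneq (forced_at t) set0.
- by rewrite cards0 mulr0.
- exact: card_ratio_le1.
Qed.

Lemma tsm_z_le_count t : tsm_z t.+1 - #|forced_at t|%:R <= 0.
Proof. by rewrite subr_le0 ler_nat /= -card_gt0; case: #|_|. Qed.

Lemma sum_tsm_z p T : is_pt adj C p -> (p <= T)%N ->
  \sum_(1 <= t < T.+1) tsm_z t = p%:R.
Proof.
move=> ptp pT.
rewrite (eq_big_nat _ _ (F2 := fun t => (t <= p)%N%:R)) => [|t /andP[t1 _]].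
- by rewrite -natr_sum sum_leq_indicator (minn_idPr pT).
- by rewrite /tsm_z (forced_at_pt _ ptp) prednK.
Qed.

Lemma tsm_feasible T : S T = setT -> TSM_feasible adj T tsm_x tsm_y tsm_z.
Proof.
move=> full; do !split.
- by move=> *; apply: binary_bool.
- by move=> *; apply: binary_bool.
- by move=> *; apply: binary_bool.
- by move=> v; apply: tsm_filled_once.
- by move=> t u v _ _; apply: tsm_y_le_forcer.
- by move=> t u v w _ _ wN wv; apply: tsm_y_le_neighbour; rewrite in_setD1 wv.
- by move=> t v /andP[t1 _]; apply: tsm_x_balance.
- by move=> t u v _; apply: tsm_force_rule.
- by case=> // t _; rewrite sum_tsm_x_step //; apply: tsm_z_ge_ratio.
- by case=> // t _; rewrite sum_tsm_x_step //; apply: tsm_z_le_count.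
Qed.

End ParallelForcing.

Theorem theorem4p3 (V : finType) (adj : rel V) (T : nat) (C : {set V}) :
  simple_graph adj -> (1 <= T)%N -> in_ZGT adj T C ->
  exists (x : nat -> V -> rat) (y : nat -> V -> V -> rat) (z : nat -> rat),
    TSM_feasible adj T x y z /\
    (#|C|%:R = \sum_(v : V) x 0%N v) /\
    exists p : nat, is_pt adj C p /\
      \sum_(1 <= t < T.+1) z t = p%:R /\ (p <= T)%N.
Proof.
move=> _ _ ZGT; have [p ptp pT] := is_pt_exists ZGT.
exists (tsm_x adj C), (tsm_y adj C), (tsm_z adj C).
split; first exact: tsm_feasible (filled_at_pt ptp pT).
split; first by rewrite sum_indicator_card.
by exists p; split; [| split; [exact: sum_tsm_z |]].
Qed.
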